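(* Let $G$ be a graph and $\mathcal{C}$ a min-max clique covering of $G$ that satisfies simple intersection. For a vertex $v\in V(G)$ and two distinct cliques $C_1,C_2\in\mathcal{C}$, we have $v\in C_1\cap C_2$ if and only if $N_G[v]=C_1\cup C_2$.
   Context: A clique covering of a graph is a set of cliques such that every edge lies in at least one of them; $\operatorname{cc}(G)$ is its minimum size. A min-max clique covering is a clique covering of size $\operatorname{cc}(G)$ consisting of maximal cliques; it has simple intersection if no three distinct cliques of it share a vertex. $N_G[v]$ is the closed neighbourhood $\{v\}\cup\{u:\{u,v\}\in E(G)\}$. *)

(* A (finite simple) graph on T : finType is a symmetric,
   irreflexive relation e : rel T (symmetry/irreflexivity are hypotheses of
   the theorem). *)
From mathcomp Require Import all_boot.
Set Implicit Arguments. Unset Strict Implicit. Unset Printing Implicit Defensive.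

Section Graph.
Variables (T : finType) (e : rel T).

Definition is_clique (C : {set T}) : bool :=
  [forall x in C, forall y in C, (x != y) ==> e x y].

Definition is_maximal_clique (C : {set T}) : Prop :=
  is_clique C /\ forall D : {set T}, is_clique D -> C \subset D -> D = C.

Definition is_clique_covering (P : {set {set T}}) : bool :=
  [forall C in P, is_clique C] &&
  [forall x, forall y, e x y ==> [exists C in P, (x \in C) && (y \in C)]].

(* cc(G): minimum size of a clique covering (#|{set T}| is an upper bound
   on the size of any family of vertex sets, used as neutral element). *)
Definition cc : nat :=
  \big[minn/#|{set T}|]_(P : {set {set T}} | is_clique_covering P) #|P|.

Definition is_minmax_clique_covering (P : {set {set T}}) : Prop :=
  is_clique_covering P /\ #|P| = cc /\
  (forall C, C \in P -> is_maximal_clique C).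

Definition simple_intersection (P : {set {set T}}) : Prop :=
  forall C1 C2 C3 v, C1 \in P -> C2 \in P -> C3 \in P ->
    C1 != C2 -> C1 != C3 -> C2 != C3 ->
    ~ (v \in C1 /\ v \in C2 /\ v \in C3).

Definition closed_nbhd (v : T) : {set T} := [set u | (u == v) || e v u].

End Graph.

(* If v lies in two cliques C1, C2 of the covering, every edge at v lies in a
   clique of the covering through v, which by simple intersection is C1 or C2;
   so N[v] is C1 ∪ C2.  Conversely, if N[v] = C1 ∪ C2, then each C_i is
   contained in N[v], so adding v to C_i keeps it a clique, and maximality
   forces v ∈ C_i. *)
From mathcomp Require Import all_boot.

Set Implicit Arguments. Unset Strict Implicit. Unset Printing Implicit Defensive.

Section Cliques.
Variables (T : finType) (e : rel T).

Lemma cliqueP (C : {set T}) :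
  reflect {in C &, forall x y, x != y -> e x y} (is_clique e C).
Proof.
apply: (iffP forall_inP) => [H x y xC yC | H x xC].
  exact: implyP (forall_inP (H x xC) y yC).
by apply/forall_inP=> y yC; apply/implyP; apply: H.
Qed.

Lemma clique_sub_closed_nbhd (C : {set T}) (v : T) :
  is_clique e C -> v \in C -> C \subset closed_nbhd e v.
Proof.
move=> /cliqueP cC vC; apply/subsetP=> u uC; rewrite inE.
by have [//|nuv] := eqVneq u v; rewrite cC // eq_sym.
Qed.

Lemma clique_setU1 (C : {set T}) (v : T) :
  symmetric e -> is_clique e C -> C \subset closed_nbhd e v ->
  is_clique e (v |: C).
Proof.
move=> e_sym /cliqueP cC /subsetP sub.
have adj u : u \in C -> u != v -> e v u.
  by move=> /sub; rewrite inE => /orP [/eqP-> /eqP|].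
apply/cliqueP=> x y; rewrite !inE.
case/orP=> [/eqP->|xC]; case/orP=> [/eqP->|yC]; rewrite ?eqxx // => nxy.
- by apply: adj; rewrite // eq_sym.
- by rewrite e_sym; apply: adj.
- exact: cC.
Qed.

Lemma maximal_clique_sub_closed_nbhd (C : {set T}) (v : T) :
  symmetric e -> is_maximal_clique e C -> C \subset closed_nbhd e v -> v \in C.
Proof.
move=> e_sym [cC maxC] sub.
by rewrite -(maxC _ (clique_setU1 e_sym cC sub) (subsetUr _ _)) setU11.
Qed.

Section Covering.
Variable P : {set {set T}}.
Hypothesis covP : is_clique_covering e P.

Lemma covering_clique (C : {set T}) : C \in P -> is_clique e C.
Proof. by case/andP: covP => /forall_inP cl _; apply: cl. Qed.

Lemma covering_edge (x y : T) :
  e x y -> exists2 C, C \in P & (x \in C) && (y \in C).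
Proof.
case/andP: covP => _ /forallP /(_ x) /forallP /(_ y) /implyP cov /cov.
by case/exists_inP=> C; exists C.
Qed.

Lemma closed_nbhd_sub_setU (C1 C2 : {set T}) (v : T) :
  simple_intersection P -> C1 \in P -> C2 \in P -> C1 != C2 ->
  v \in C1 -> v \in C2 -> closed_nbhd e v \subset C1 :|: C2.
Proof.
move=> si PC1 PC2 n12 vC1 vC2; apply/subsetP=> u; rewrite !inE.
case/orP=> [/eqP->|/covering_edge [C PC /andP [vC uC]]]; first by rewrite vC1.
have [<-|n1] := eqVneq C C1; first by rewrite uC.
have [<-|n2] := eqVneq C C2; first by rewrite uC orbT.
by case: (si C1 C2 C v) => //; rewrite eq_sym.
Qed.

End Covering.
End Cliques.

Theorem mainTheorem16 (T : finType) (e : rel T)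
  (e_sym : symmetric e) (e_irr : irreflexive e)
  (P : {set {set T}})
  (HP : is_minmax_clique_covering e P) (Hsi : simple_intersection P)
  (v : T) (C1 C2 : {set T}) (HC1 : C1 \in P) (HC2 : C2 \in P) (Hne : C1 != C2) :
  v \in C1 :&: C2 <-> closed_nbhd e v = C1 :|: C2.
Proof.
case: HP => covP [_ maxP].
split=> [/setIP [vC1 vC2] | Nv].
- apply/eqP; rewrite eqEsubset (closed_nbhd_sub_setU covP) //=.
  by rewrite subUset !clique_sub_closed_nbhd ?(covering_clique covP).
- have inC C : C \in P -> C \subset C1 :|: C2 -> v \in C.
    by move=> PC; rewrite -Nv; apply: maximal_clique_sub_closed_nbhd; auto.
  by rewrite inE !inC ?subsetUl ?subsetUr.
Qed.
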